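(* Let $n\in\mathbb{N}$ and assign each vertex $x$ of $K_n$ a weight $w(x)>0$; define the weight of an edge $xy$ as $w(xy):=w(x)w(y)$ and, for a subgraph $H\subseteq K_n$, $w(H):=\sum_{e\in E(H)}w(e)$. Let $S_n:=\sum_{x\in V(K_n)}w(x)$ and $M_n:=\max_{x\in V(K_n)}w(x)$. Then for every $\ell\ge 2$, $$w(K_n)-\max\{w(H): H\subseteq K_n,\ K_\ell\not\subseteq H\}\ \ge\ \frac{S_n}{2}\left(\frac{S_n}{\ell-1}-M_n\right).$$ *)

From mathcomp Require Import all_boot all_order all_algebra.
Set Implicit Arguments. Unset Strict Implicit. Unset Printing Implicit Defensive.
Import Order.TTheory GRing.Theory Num.Theory.
Local Open Scope ring_scope.

(* A subgraph H of K_n is represented by its edge set E (vertices of H are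
   irrelevant to its weight and to containing a K_l). *)
Definition Kn_edges (n : nat) : {set {set 'I_n}} := [set e : {set 'I_n} | #|e| == 2%N].

Definition is_subgraph (n : nat) (E : {set {set 'I_n}}) : Prop :=
  E \subset Kn_edges n.

Definition edge_weight (R : numDomainType) (n : nat) (w : 'I_n -> R)
  (e : {set 'I_n}) : R := \prod_(x in e) w x.

Definition graph_weight (R : numDomainType) (n : nat) (w : 'I_n -> R)
  (E : {set {set 'I_n}}) : R := \sum_(e in E) edge_weight w e.

Definition contains_clique (n : nat) (E : {set {set 'I_n}}) (l : nat) : Prop :=
  exists S : {set 'I_n}, #|S| = l /\
    forall x y, x \in S -> y \in S -> x != y -> [set x; y] \in E.

Definition total_weight (R : numDomainType) (n : nat) (w : 'I_n -> R) : R :=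
  \sum_(x < n) w x.

(* maximum vertex weight (0 for n = 0; weights are positive) *)
Definition max_weight (R : realDomainType) (n : nat) (w : 'I_n -> R) : R :=
  \big[Num.max/0]_(x < n) w x.

From mathcomp Require Import all_boot all_order all_algebra.
From mathcomp Require Import ring lra.
Set Implicit Arguments. Unset Strict Implicit. Unset Printing Implicit Defensive.
Import Order.TTheory GRing.Theory Num.Theory.
Local Open Scope ring_scope.

(* A weighted Turan / Motzkin-Straus argument. For a vertex x let D(x) be the
   weight of the vertices not adjacent to x in H, x itself included. If H has
   no K_(k+1) then S^2 <= k * sum_x w(x) D(x): remove a vertex v minimising D
   together with its non-neighbours; what is left has no K_k, and induction
   plus Cauchy-Schwarz conclude. Counting ordered pairs,
   sum_x w(x) D(x) = sum_x w(x)^2 + 2 (w(K_n) - w(H)), and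
   sum_x w(x)^2 <= M S. *)

Lemma sqrD_le_Cauchy_Schwarz (R : realFieldType) (k s d A B : R) :
  0 <= k -> 0 <= A -> s ^+ 2 <= k * A -> d * d <= B ->
  (d + s) ^+ 2 <= (k + 1) * (B + A).
Proof.
move=> k0 A0 hA hB.
have [k_eq0|kn0] := eqVneq k 0.
  rewrite k_eq0 mul0r in hA *; have : s ^+ 2 == 0 by rewrite eq_le hA sqr_ge0.
  by rewrite sqrf_eq0 => /eqP ->; nra.
have kp : 0 < k by rewrite lt_def kn0 k0.
have h1 : 0 <= (k + 1) * (k * A - s ^+ 2) by apply: mulr_ge0; [lra | rewrite subr_ge0].
have h2 : 0 <= k * (k + 1) * (B - d * d) by apply: mulr_ge0; [nra | rewrite subr_ge0].
have h3 : 0 <= (k * d - s) ^+ 2 by apply: sqr_ge0.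
(* h1 + h2 + h3 is exactly k ((k + 1) (B + A) - (d + s)^2). *)
suff : 0 <= k * ((k + 1) * (B + A) - (d + s) ^+ 2) by rewrite pmulr_rge0 // subr_ge0.
nra.
Qed.

Section WeightedTuran.
Variables (R : realFieldType) (n : nat) (w : 'I_n -> R) (E : {set {set 'I_n}}).
Hypothesis w_gt0 : forall x, 0 < w x.

Definition nonadj (x y : 'I_n) : bool := (x == y) || ([set x; y] \notin E).

Definition nonadj_weight (U : {set 'I_n}) x := \sum_(y in U | nonadj x y) w y.

Definition clique (I : {set 'I_n}) :=
  forall x y, x \in I -> y \in I -> x != y -> [set x; y] \in E.

Lemma nonadj_weight_ge0 U x : 0 <= nonadj_weight U x.
Proof. by apply: sumr_ge0 => y _; apply: ltW. Qed.

Lemma nonadj_weightS (U V : {set 'I_n}) x :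
  V \subset U -> nonadj_weight V x <= nonadj_weight U x.
Proof.
move=> sVU; rewrite /nonadj_weight [leRHS](big_setIDcond _ U V) (setIidPr sVU).
by rewrite lerDl; apply: sumr_ge0 => y _; apply: ltW.
Qed.

Lemma clique_setU1 v I :
  clique I -> (forall y, y \in I -> [set v; y] \in E) -> clique (v |: I).
Proof.
move=> cI vI a b; rewrite !inE => /orP[/eqP ->|aI] /orP[/eqP ->|bI]; rewrite ?eqxx //.
- by move=> _; apply: vI.
- by move=> _; rewrite setUC; apply: vI.
- exact: cI.
Qed.

Lemma sqr_weight_le_clique_free k (U : {set 'I_n}) :
  (forall I : {set 'I_n}, I \subset U -> clique I -> #|I| <> k.+1) ->
  (\sum_(x in U) w x) ^+ 2 <= k%:R * \sum_(x in U) w x * nonadj_weight U x.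
Proof.
elim: k U => [|k IH] U noK.
  case: (set_0Vmem U) => [->|[x xU]]; first by rewrite big_set0 expr0n mul0r.
  exfalso; apply: (noK [set x]); rewrite ?sub1set ?cards1 //.
  by move=> a b; rewrite !inE => /eqP -> /eqP ->; rewrite eqxx.
case: (set_0Vmem U) => [->|[x0 x0U]].
  by rewrite big_set0 expr0n mulr_ge0 // sumr_ge0 // => x _;
    rewrite mulr_ge0 ?nonadj_weight_ge0 ?ltW.
case: (arg_minP (nonadj_weight U) x0U) => v; rewrite -/(v \in U) => vU vmin.
set N := [set y in U | nonadj v y]; set U' := U :\: N.
have sNU : N \subset U by apply/subsetP => y; rewrite inE => /andP[].
have sU'U : U' \subset U := subsetDl U N.
have splitU F : \sum_(x in U) F x = \sum_(x in N) F x + \sum_(x in U') F x :> R.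
  by rewrite (big_setID N) (setIidPr sNU).
have wN : \sum_(x in N) w x = nonadj_weight U v by rewrite big_set.
have noK' : forall I : {set 'I_n}, I \subset U' -> clique I -> #|I| <> k.+1.
  move=> I sIU' cI cardI.
  have vI : v \notin I by apply/negP => /(subsetP sIU'); rewrite !inE vU /nonadj eqxx.
  have adj_v y : y \in I -> [set v; y] \in E.
    move=> /(subsetP sIU'); rewrite !inE => /andP[+ yU].
    by rewrite yU /nonadj negb_or => /andP[_ /negbNE].
  apply: (noK (v |: I)); first by rewrite subUset sub1set vU (subset_trans sIU').
    exact: clique_setU1.
  by rewrite cardsU1 vI cardI.
have hU' : (\sum_(x in U') w x) ^+ 2 <=
    k%:R * \sum_(x in U') w x * nonadj_weight U x.
  apply: (le_trans (IH U' noK')); rewrite ler_wpM2l // ler_sum // => x _.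
  by apply: ler_wpM2l; [exact: ltW | exact: nonadj_weightS].
have hN : nonadj_weight U v * nonadj_weight U v <=
    \sum_(x in N) w x * nonadj_weight U x.
  rewrite -{1}wN mulr_suml ler_sum // => x xN.
  by apply: ler_wpM2l; [exact: ltW | exact/vmin/(subsetP sNU)].
rewrite !(splitU) wN -natr1; apply: sqrD_le_Cauchy_Schwarz => //.
by rewrite sumr_ge0 // => x _; rewrite mulr_ge0 ?nonadj_weight_ge0 ?ltW.
Qed.

End WeightedTuran.

Section EdgeWeights.
Variables (R : realFieldType) (n : nat) (w : 'I_n -> R).

Lemma set2_inj (x y a b : 'I_n) : x != y -> [set x; y] = [set a; b] ->
  (x, y) = (a, b) \/ (x, y) = (b, a).
Proof.
move=> xy exy.
have : x \in [set a; b] by rewrite -exy set21.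
have : y \in [set a; b] by rewrite -exy set22.
rewrite !inE => /orP[/eqP ey|/eqP ey] /orP[/eqP ex|/eqP ex]; subst;
  by [rewrite eqxx in xy | left | right].
Qed.

Lemma edge_weight2 (a b : 'I_n) : a != b -> edge_weight w [set a; b] = w a * w b.
Proof. by move=> ab; rewrite /edge_weight big_setU1 ?big_set1 // in_set1. Qed.

(* Every edge {a, b} is counted twice, as (a, b) and as (b, a). *)
Lemma sum_ordered_pairs (F : {set {set 'I_n}}) : F \subset Kn_edges n ->
  \sum_x \sum_(y | (x != y) && ([set x; y] \in F)) w x * w y
  = 2%:R * graph_weight w F.
Proof.
move=> sFK; rewrite pair_big_dep.
rewrite (partition_big (fun p => [set p.1; p.2]) (mem F)) /=; last by case=> x y /andP[].
rewrite /graph_weight mulr_sumr; apply: eq_bigr => e eF.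
have /cards2P[a [b [ab e_ab]]] : #|e| == 2%N by move: (subsetP sFK e eF); rewrite inE.
subst e.
rewrite (bigD1 (a, b)) /=; last by rewrite ab eF eqxx.
rewrite (bigD1 (b, a)) /=; last by rewrite xpair_eqE negb_and eq_sym ab setUC eF eqxx.
rewrite big_pred0 ?addr0 ?edge_weight2 //; last first.
  case=> x y /=; apply/negP => /andP[/andP[/andP[/andP[xy _] /eqP exy] h1] h2].
  by case: (set2_inj xy exy) => e; [move: h1 | move: h2]; rewrite e eqxx.
by rewrite mulr2n mulrDl mul1r mulrC.
Qed.

Lemma sum_weight_nonadj (E : {set {set 'I_n}}) : E \subset Kn_edges n ->
  \sum_(x in [set: 'I_n]) w x * nonadj_weight w E [set: 'I_n] x =
  \sum_(x < n) w x ^+ 2 + 2%:R * (graph_weight w (Kn_edges n) - graph_weight w E).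
Proof.
move=> sEK.
have -> : graph_weight w (Kn_edges n) - graph_weight w E =
    graph_weight w (Kn_edges n :\: E).
  by rewrite /graph_weight (big_setID E) (setIidPr sEK) addrAC subrr add0r.
rewrite -sum_ordered_pairs ?subsetDl // big_set -big_split /=.
apply: eq_bigr => x _.
rewrite /nonadj_weight mulr_sumr (bigD1 x) ?in_setT /nonadj ?eqxx //= expr2.
congr (_ + _); apply: eq_bigl => y.
by rewrite in_setT !inE /Kn_edges ?inE cards2 (eq_sym y x); case: (x == y).
Qed.

End EdgeWeights.

Lemma sum_sqr_le_max (R : realDomainType) (n : nat) (w : 'I_n -> R) :
  (forall x, 0 < w x) -> \sum_(x < n) w x ^+ 2 <= max_weight w * total_weight w.
Proof.
move=> w_gt0; rewrite /total_weight mulr_sumr ler_sum // => x _.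
by rewrite expr2; apply: ler_wpM2r; [exact: ltW | exact: le_bigmax].
Qed.

Theorem mainTheorem8 (R : realFieldType) (n : nat) (w : 'I_n -> R)
  (hw : forall x, 0 < w x) (l : nat) (hl : (2 <= l)%N) :
  forall E : {set {set 'I_n}}, is_subgraph E -> ~ contains_clique E l ->
    graph_weight w (Kn_edges n) - graph_weight w E >=
      total_weight w / 2%:R * (total_weight w / (l.-1)%:R - max_weight w).
Proof.
move=> E sEK noKl.
have l_gt0 : (0 < l)%N by apply: ltnW.
have noK (I : {set 'I_n}) : I \subset [set: 'I_n] -> clique E I -> #|I| <> l.-1.+1.
  by move=> _ cI cardI; apply: noKl; exists I; rewrite cardI prednK.
have turan := sqr_weight_le_clique_free hw noK.
rewrite sum_weight_nonadj // big_set in turan.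
have hM := sum_sqr_le_max hw.
have k_gt0 : 0 < (l.-1)%:R :> R by rewrite ltr0n -ltnS prednK.
move: turan hM k_gt0; rewrite -/(total_weight w).
set S := total_weight w; set Q := \sum_(x < n) _; set W := _ - _.
set k := (l.-1)%:R; set M := max_weight w => turan hM k_gt0.
have hS : S * (S / k) <= Q + 2%:R * W.
  by rewrite mulrA ler_pdivrMr // -expr2 (mulrC _ k).
rewrite mulrBr; lra.
Qed.
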